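(* Let $L$ be a regular language over a nonempty finite alphabet $A$ with minimal automaton $\mathcal{A}_L$. Then $\mu(L)=1$ if and only if $\mathcal{A}_L$ is a zero automaton whose (unique) sink state is final, and $\mu(L)=0$ if and only if $\mathcal{A}_L$ is a zero automaton whose sink state is non-final.
   Context: Automata are complete, deterministic, finite and accessible, $\langle Q,A,\cdot,q_0,F\rangle$. $\mu(L)=\lim_{n\to\infty}|L\cap A^n|/|A|^n$ when the limit exists. A sink state $q$ satisfies $q\cdot a=q$ for all $a\in A$. A zero automaton is an automaton that has a sink state and a synchronising word $w$ (a word such that $p\cdot w$ is the same state for all $p\in Q$). *)

From HB Require Import structures.
From mathcomp Require Import all_boot all_order all_algebra.
Set Implicit Arguments. Unset Strict Implicit. Unset Printing Implicit Defensive.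
Import Order.TTheory GRing.Theory Num.Theory.
Local Open Scope ring_scope.

Record dfa (A : finType) := Dfa {
  state : finType;
  trans : state -> A -> state;
  init : state;
  final : pred state
}.

Arguments final {A} d.
Arguments trans {A} d.
Arguments init {A} d.

Section Automata.
Variable A : finType.
Variable M : dfa A.

Definition run (p : state M) (w : seq A) : state M := foldl (trans M) p w.

Definition accepts (w : seq A) : bool := final M (run (init M) w).

Definition accessible : Prop := forall q : state M, exists w, run (init M) w = q.

Definition reduced : Prop :=
  forall p q : state M, (forall w, final M (run p w) = final M (run q w)) -> p = q.

Definition is_sink (q : state M) : Prop := forall a : A, trans M q a = q.

Definition synchronising (w : seq A) : Prop :=
  forall p p' : state M, run p w = run p' w.

Definition zero_automaton : Prop :=
  (exists q, is_sink q) /\ (exists w, synchronising w).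

End Automata.

(* M is the minimal automaton of L: accessible, reduced, recognises L
   (unique up to isomorphism). *)
Definition minimal_automaton_of (A : finType) (M : dfa A) (L : pred (seq A)) : Prop :=
  [/\ accessible M, reduced M & forall w, L w = accepts M w].

Definition density_at (A : finType) (L : pred (seq A)) (n : nat) : rat :=
  (#|[set t : n.-tuple A | L (tval t)]|)%:R / (#|A| ^ n)%:R.

Definition density_is (A : finType) (L : pred (seq A)) (l : rat) : Prop :=
  forall eps : rat, 0 < eps ->
    exists N : nat, forall n : nat, (N <= n)%N -> `|density_at L n - l| < eps.

From HB Require Import structures.
From mathcomp Require Import all_boot all_order all_algebra.
From mathcomp Require Import zify.
From Stdlib Require Import Classical.
Set Implicit Arguments. Unset Strict Implicit. Unset Printing Implicit Defensive.
Import Order.TTheory GRing.Theory Num.Theory.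

(* Let [nwords P n p] count the words of length n leading from p into P, so that
   mu(L) = 1 (resp. 0) says that the words rejected (resp. accepted) from the
   initial state are o(|A|^n).
   If q is a sink in P and w is synchronising, every state other than q is sent to
   q by w, so among the words avoiding q the proportion drops by a factor
   1 - |A|^-|w| every |w| letters.
   Conversely, suppose the words leading outside P are negligible from the initial
   state, hence from every state p (accessibility). If no state reachable from p
   accepted every word, finiteness would give rejected extensions of bounded length
   K for all of them, and a fixed proportion of the words of lengths n .. n + K
   would be bad. So every state reaches a state all of whose words lie in P; by
   reducedness that state is unique, hence a sink reachable from everywhere, and
   concatenating words driving each state into it yields a synchronising word. *)

Definition negligible (s : nat) (g : nat -> nat) : Prop :=
  forall D, 0 < D -> exists N, forall n, N <= n -> D * g n < s ^ n.

Lemma negligible_le s (g h : nat -> nat) :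
  (forall n, g n <= h n) -> negligible s h -> negligible s g.
Proof.
move=> le_gh negl_h D /negl_h[N HN]; exists N => n /HN.
by apply: leq_ltn_trans; rewrite leq_mul2l le_gh orbT.
Qed.

Lemma bernoulli_expn a m : a ^ m * (a + m) <= a.+1 ^ m * a.
Proof.
elim: m => [|m IH]; first by rewrite !expn0 addn0.
rewrite !expnS; set x := a ^ m in IH *; set y := a.+1 ^ m in IH *; nia.
Qed.

Lemma ltn_mul_expnS a m D : 0 < a -> D * a <= m -> D * a ^ m < a.+1 ^ m.
Proof.
move=> a_gt0 le_m; have := bernoulli_expn a m.
have : 0 < a ^ m by rewrite expn_gt0 a_gt0.
nia.
Qed.

Lemma negligible_geometric s k (b : nat -> nat) : 0 < s ->
  (forall n, b n <= s ^ n) -> (forall n, b (n + k) <= (s ^ k).-1 * b n) ->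
  negligible s b.
Proof.
move=> s_gt0 b_le b_step; set a := (s ^ k).-1 in b_step *.
have b_iter m r : b (m * k + r) <= a ^ m * s ^ r.
  elim: m => [|m IH]; first by rewrite add0n mul1n b_le.
  rewrite mulSn -addnA addnC (leq_trans (b_step _)) // expnS -mulnA.
  by rewrite leq_mul2l IH orbT.
move=> D D_gt0; have [a0|a_gt0] := posnP a.
  exists k => n le_kn.
  have -> : b n = 0.
    by apply/eqP; rewrite -leqn0 -(subnK le_kn) (leq_trans (b_step _)) // a0.
  by rewrite muln0 expn_gt0 s_gt0.
have k_gt0 : 0 < k by move: a_gt0; rewrite /a; case: (k).
exists (D * a * k) => n le_n; rewrite (divn_eq n k).
set m := n %/ k; set r := n %% k.
have le_m : D * a <= m by rewrite /m leq_divRL.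
apply: (@leq_ltn_trans (D * (a ^ m * s ^ r))); first by rewrite leq_mul2l b_iter orbT.
rewrite mulnA expnD (mulnC m k) expnM ltn_pmul2r ?expn_gt0 ?s_gt0 //.
have -> : s ^ k = a.+1 by rewrite /a prednK // expn_gt0 s_gt0.
exact: ltn_mul_expnS.
Qed.

Section NegligibleRatio.
Local Open Scope ring_scope.

Lemma negligibleP s (g : nat -> nat) : (0 < s)%N ->
  negligible s g <-> forall eps : rat, 0 < eps ->
    exists N, forall n, (N <= n)%N -> (g n)%:R / (s ^ n)%:R < eps.
Proof.
move=> s_gt0.
have ratio_lt n D : (0 < D)%N ->
    ((g n)%:R / (s ^ n)%:R < D%:R^-1 :> rat) = (D * g n < s ^ n)%N.
  move=> D_gt0; rewrite ltr_pdivrMr ?ltr0n ?expn_gt0 ?s_gt0 //.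
  by rewrite ltr_pdivlMl ?ltr0n // -natrM ltr_nat.
split=> [negl eps eps_gt0 | small D D_gt0].
- set D := Num.bound eps^-1.
  have lt_D : eps^-1 < D%:R by apply: archi_boundP; rewrite invr_ge0 ltW.
  have D_gt0 : (0 < D)%N by rewrite -(ltr_nat rat) (lt_trans _ lt_D) // invr_gt0.
  have [N HN] := negl D D_gt0; exists N => n /HN; rewrite -ratio_lt // => lt_n.
  by rewrite (lt_trans lt_n) // -[X in _ < X]invrK ltf_pV2 ?posrE ?invr_gt0 ?ltr0n.
- have [N HN] := small (D%:R^-1) (ltac:(by rewrite invr_gt0 ltr0n)).
  by exists N => n /HN; rewrite ratio_lt.
Qed.

End NegligibleRatio.

Lemma finite_bounded_witness (T : finType) (X : Type) (f : X -> nat)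
    (R : T -> Prop) (Q : T -> X -> Prop) :
  (forall t, R t -> exists x, Q t x) ->
  exists K, forall t, R t -> exists x, f x <= K /\ Q t x.
Proof.
move=> witness.
suff [K HK] : exists K, forall t, t \in enum T -> R t -> exists x, f x <= K /\ Q t x.
  by exists K => t; apply: HK; rewrite mem_enum.
elim: (enum T) => [|t0 l [K IH]]; first by exists 0.
have [[x Qx]|no_x] := classic (exists x, Q t0 x).
  exists (maxn K (f x)) => t; rewrite inE.
  move=> /predU1P[-> _|t_l /(IH t t_l)[y [le_y Qy]]].
    by exists x; rewrite leq_maxr.
  by exists y; rewrite (leq_trans le_y) ?leq_maxl.
by exists K => t; rewrite inE => /predU1P[-> /witness/no_x[]|]; apply: IH.
Qed.

Section WordCounts.
Variables (A : finType) (M : dfa A).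
Implicit Types (p q r : state M) (P : pred (state M)) (u w : seq A).
Local Notation s := #|A|.

Lemma run_cat p u w : run p (u ++ w) = run (run p u) w.
Proof. exact: foldl_cat. Qed.

Lemma run_sink q u : is_sink q -> run q u = q.
Proof. by move=> q_sink; elim: u => //= a u; rewrite /run /= q_sink. Qed.

Definition reachable p r : Prop := exists u, run p u = r.

Fixpoint nwords P n p : nat :=
  if n is n'.+1 then \sum_(a : A) nwords P n' (trans M p a) else P p.

Lemma card_tupleS n (Q : pred (seq A)) :
  #|[set t : n.+1.-tuple A | Q t]|
    = \sum_(a : A) #|[set t : n.-tuple A | Q (a :: t)]|.
Proof.
have card_sum m (Q' : pred (seq A)) :
    #|[set t : m.-tuple A | Q' t]| = \sum_(t : m.-tuple A) Q' t.
  by rewrite -sum1_card big_mkcond /=; apply: eq_bigr => t _; rewrite inE; case: (Q' t).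
pose cons_tuple (x : A * n.-tuple A) := [tuple of x.1 :: x.2].
rewrite card_sum (reindex cons_tuple) /=; last first.
  exists (fun t : n.+1.-tuple A => (thead t, [tuple of behead t])).
    by move=> [a t] _; congr (_, _); apply/val_inj.
  by move=> t _; apply/val_inj; case: t => [[|a t]].
rewrite -(pair_bigA _ (fun a (t : n.-tuple A) => (Q (a :: t) : nat))) /=.
by apply: eq_bigr => a _; rewrite (card_sum _ (fun u => Q (a :: u))).
Qed.

Lemma card_run_tuple P n p : #|[set t : n.-tuple A | P (run p t)]| = nwords P n p.
Proof.
elim: n p => [|n IH] p /=.
  rewrite (eq_card (B := if P p then pred1 [tuple] else pred0)).
    by case: (P p); rewrite ?card1 ?card0.
  by move=> t; rewrite [t]tuple0 !inE; case: (P p).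
by rewrite (card_tupleS _ (fun u => P (run p u))); apply: eq_bigr => a _; apply: IH.
Qed.

Lemma nwordsC P n p : nwords P n p + nwords (predC P) n p = s ^ n.
Proof.
elim: n p => [|n IH] p /=; first by case: (P p).
by rewrite -big_split /= (eq_bigr (fun _ => s ^ n)) // sum_nat_const expnS.
Qed.

Lemma nwordsT n p : nwords predT n p = s ^ n.
Proof.
elim: n p => [|n IH] p //=.
by rewrite (eq_bigr (fun _ => s ^ n)) // sum_nat_const expnS.
Qed.

Lemma nwords_le P n p : nwords P n p <= s ^ n.
Proof. by rewrite -(nwordsC P n p) leq_addr. Qed.

Lemma sub_nwords P P' n p : subpred P P' -> nwords P n p <= nwords P' n p.
Proof.
move=> sub_P; elim: n p => [|n IH] p /=; last by apply: leq_sum => a _; apply: IH.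
by case P_p: (P p); rewrite // sub_P.
Qed.

Lemma nwordsD P m n p :
  nwords P (m + n) p = \sum_q nwords (pred1 q) m p * nwords P n q.
Proof.
elim: m p => [|m IH] p /=.
  rewrite (bigD1 p) //= eqxx mul1n big1 ?addn0 // => q q_p.
  by rewrite eq_sym (negbTE q_p).
under eq_bigr => a _ do rewrite IH.
by rewrite exchange_big /=; apply: eq_bigr => q _; rewrite big_distrl.
Qed.

Lemma nwords_sum_pred1 P n p : \sum_q nwords (pred1 q) n p * P q = nwords P n p.
Proof. by rewrite -[in RHS](addn0 n) nwordsD. Qed.

Lemma nwords_gt0 P n p :
  reflect (exists2 u, size u = n & P (run p u)) (0 < nwords P n p).
Proof.
apply: (iffP idP) => [|[u <-]]; last first.
  elim: u p => [|a u IH] p /=; first by rewrite /run /= => ->.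
  by move=> P_u; rewrite (bigD1 a) //= (leq_trans (IH _ P_u)) ?leq_addr.
elim: n p => [|n IH] p /=; first by case P_p: (P p) => // _; exists [::].
rewrite lt0n sum_nat_seq_neq0 => /hasP[a _ /andP[_]].
by rewrite -lt0n => /IH[u <- P_u]; exists (a :: u).
Qed.

Lemma nwords_sink P n q : is_sink q -> nwords P n q = P q * s ^ n.
Proof.
move=> q_sink; elim: n => [|n IH] /=; first by rewrite muln1.
rewrite (eq_bigr (fun _ => P q * s ^ n)) => [|a]; last by rewrite q_sink.
by rewrite sum_nat_const expnS mulnCA.
Qed.

End WordCounts.

Section ZeroAutomata.
Variables (A : finType) (M : dfa A).
Hypothesis A_gt0 : 0 < #|A|.
Implicit Types (p q r z : state M) (P : pred (state M)) (u w : seq A).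
Local Notation s := #|A|.

Lemma nwords_not_sink q w n p : is_sink q -> synchronising M w ->
  nwords (predC (pred1 q)) (n + size w) p
    <= (s ^ size w).-1 * nwords (predC (pred1 q)) n p.
Proof.
move=> q_sink w_sync; set k := size w.
have step r : nwords (predC (pred1 q)) k r <= (s ^ k).-1 * (r != q).
  have [->|r_q] := eqVneq r q; first by rewrite nwords_sink //= eqxx.
  have : 0 < nwords (pred1 q) k r.
    by apply/nwords_gt0; exists w; rewrite //= (w_sync r q) run_sink.
  by rewrite muln1 -(nwordsC (pred1 q) k r) -subn1 => x_gt0; rewrite -addnBAC ?leq_addl.
rewrite nwordsD -(nwords_sum_pred1 _ n p) big_distrr; apply: leq_sum => r _.
by rewrite /= mulnCA leq_mul2l step orbT.
Qed.

Lemma sink_sync_negligible P q w p : is_sink q -> P q -> synchronising M w ->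
  negligible s (fun n => nwords (predC P) n p).
Proof.
move=> q_sink Pq w_sync.
apply: (@negligible_le _ _ (fun n => nwords (predC (pred1 q)) n p)).
  by move=> n; apply: sub_nwords => r /=; apply: contra => /eqP ->.
apply: (negligible_geometric (k := size w)) => // n; first exact: nwords_le.
exact: nwords_not_sink.
Qed.

Lemma negligible_run P p u : negligible s (fun n => nwords P n p) ->
  negligible s (fun n => nwords P n (run p u)).
Proof.
move=> negl D D_gt0; set k := size u.
have le_shift n : nwords P n (run p u) <= nwords P (k + n) p.
  have reach_u : 0 < nwords (pred1 (run p u)) k p.
    by apply/nwords_gt0; exists u; rewrite /= ?eqxx.
  rewrite nwordsD (bigD1 (run p u)) //=; apply: leq_trans (leq_addr _ _).
  by rewrite -{1}[nwords P n _]mul1n leq_mul2r reach_u orbT.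
have [N HN] := negl (D * s ^ k) (ltac:(by rewrite muln_gt0 D_gt0 expn_gt0 A_gt0)).
exists N => n le_n; have := HN (k + n) (leq_trans le_n (leq_addl _ _)).
rewrite expnD => lt_kn; rewrite -(@ltn_pmul2l (s ^ k)) ?expn_gt0 ?A_gt0 //.
apply: leq_ltn_trans lt_kn.
by rewrite mulnCA mulnA leq_mul2l le_shift orbT.
Qed.

Lemma window_gt0 P K r u : size u <= K -> ~~ P (run r u) ->
  0 < \sum_(j < K.+1) nwords (predC P) j r * s ^ (K - j).
Proof.
move=> le_u rej_u; rewrite (bigD1 (Ordinal (le_u : size u < K.+1))) //=.
rewrite (leq_trans _ (leq_addr _ _)) // muln_gt0 expn_gt0 A_gt0 andbT.
by apply/nwords_gt0; exists u.
Qed.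

(* Every word of length [n] from [p] has an extension of some length [j <= K]
   leaving [P]; with weight [s ^ (K - j)], the words of length [n + j] ending
   outside [P] account for each such prefix at least once. *)
Lemma window_lower P K n p :
  (forall r, reachable p r -> exists u, size u <= K /\ ~~ P (run r u)) ->
  s ^ n <= \sum_(j < K.+1) nwords (predC P) (n + j) p * s ^ (K - j).
Proof.
move=> rejects; rewrite -(nwordsT n p) -nwords_sum_pred1.
under [X in _ <= X]eq_bigr => j _ do rewrite nwordsD big_distrl /=.
rewrite exchange_big /=; apply: leq_sum => q _.
under [X in _ <= X]eq_bigr => j _ do rewrite -mulnA.
rewrite -big_distrr /= muln1.
have [-> //|reach_q] := posnP (nwords (pred1 q) n p).
have [u [le_u rej_u]] : exists u, size u <= K /\ ~~ P (run q u).
  by apply: rejects; have /nwords_gt0[v _ /eqP <-] := reach_q; exists v.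
by rewrite -{1}[nwords _ n p]muln1 leq_mul2l (window_gt0 le_u rej_u) orbT.
Qed.

Lemma negligible_universal P p : negligible s (fun n => nwords (predC P) n p) ->
  exists2 z, reachable p z & forall u, P (run z u).
Proof.
move=> negl; apply: NNPP => no_universal.
have rejects r : reachable p r -> exists u, ~~ P (run r u).
  move=> reach_r; apply: NNPP => all_P; apply: no_universal; exists r => // u.
  by apply: NNPP => /negP not_P; apply: all_P; exists u.
have [K bounded] := finite_bounded_witness size rejects.
have [N HN] := negl (K.+1 * s ^ K) (ltac:(by rewrite muln_gt0 expn_gt0 A_gt0)).
have term_lt (j : 'I_K.+1) :
    K.+1 * (nwords (predC P) (N + j) p * s ^ (K - j)) < s ^ N.
  have sj_gt0 : 0 < s ^ j by rewrite expn_gt0 A_gt0.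
  have eK : s ^ K = s ^ (K - j) * s ^ j by rewrite -expnD subnK // -ltnS.
  rewrite -(ltn_pmul2r sj_gt0) -expnD.
  apply: leq_ltn_trans (HN (N + j) (leq_addr _ _)); rewrite eK.
  set x := nwords _ _ _; set a := s ^ (K - j); set b := s ^ j; nia.
have sum_lt : \sum_(j < K.+1) nwords (predC P) (N + j) p * s ^ (K - j) < s ^ N.
  have : K.+1 * \sum_(j < K.+1) nwords (predC P) (N + j) p * s ^ (K - j)
           <= K.+1 * (s ^ N).-1.
    rewrite big_distrr /= -[X in _ <= X * _]card_ord -sum_nat_const.
    by apply: leq_sum => j _; rewrite -ltnS prednK ?expn_gt0 ?A_gt0 ?term_lt.
  rewrite leq_pmul2l // => /leq_ltn_trans; apply.
  by rewrite ltn_predL expn_gt0 A_gt0.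
by have := window_lower N bounded; rewrite leqNgt sum_lt.
Qed.

Lemma sink_reachable_synchronising z : is_sink z -> (forall p, reachable p z) ->
  exists w, forall p, run p w = z.
Proof.
move=> z_sink reach_z.
suff [w w_z] : exists w, forall p, p \in enum (state M) -> run p w = z.
  by exists w => p; apply: w_z; rewrite mem_enum.
elim: (enum _) => [|p0 l [w IH]]; first by exists [::].
have [u u_z] := reach_z (run p0 w).
exists (w ++ u) => p; rewrite inE run_cat => /predU1P[-> //|/IH ->].
exact: run_sink.
Qed.

Lemma negligible_rejectionP P : accessible M ->
    (forall p q, (forall w, P (run p w) = P (run q w)) -> p = q) ->
  negligible s (fun n => nwords (predC P) n (init M)) <->
  zero_automaton M /\ exists q, is_sink q /\ P q.
Proof.
move=> acc red; split=> [negl|[[_ [w w_sync]] [q [q_sink Pq]]]]; last first.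
  exact: sink_sync_negligible q_sink Pq w_sync.
have universal_from p : exists2 z, reachable p z & forall u, P (run z u).
  by have [u <-] := acc p; apply/negligible_universal/negligible_run.
have [z _ z_univ] := universal_from (init M).
have univ_eq z' : (forall u, P (run z' u)) -> z' = z.
  by move=> z'_univ; apply: red => u; rewrite z_univ z'_univ.
have z_sink : is_sink z by move=> a; apply: univ_eq => u; apply: (z_univ (a :: u)).
have reach_z p : reachable p z by have [z' ? /univ_eq <-] := universal_from p.
have [w w_z] := sink_reachable_synchronising z_sink reach_z.
split; last by exists z; split => //; apply: (z_univ [::]).
by split; [exists z | exists w => p p'; rewrite !w_z].
Qed.

End ZeroAutomata.

Section Density.
Local Open Scope ring_scope.
Variables (A : finType) (L : pred (seq A)) (M : dfa A).
Hypothesis A_gt0 : (0 < #|A|)%N.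
Hypothesis L_rec : forall w, L w = accepts M w.
Local Notation s := #|A|.

Lemma density_atE n :
  density_at L n = (nwords (final M) n (init M))%:R / (s ^ n)%:R.
Proof.
rewrite /density_at -card_run_tuple; congr (_%:R / _).
by apply: eq_card => t; rewrite !inE L_rec.
Qed.

Lemma density_is1 :
  density_is L 1 <-> negligible s (fun n => nwords (predC (final M)) n (init M)).
Proof.
have dist1 n : `|density_at L n - 1| =
    (nwords (predC (final M)) n (init M))%:R / (s ^ n)%:R.
  have sn_gt0 : 0 < (s ^ n)%:R :> rat by rewrite ltr0n expn_gt0 A_gt0.
  rewrite density_atE.
  have -> : (nwords (final M) n (init M))%:R =
      (s ^ n)%:R - (nwords (predC (final M)) n (init M))%:R :> rat.
    by rewrite -(nwordsC (final M) n (init M)) natrD addrK.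
  rewrite mulrBl divff ?gt_eqF // addrAC subrr add0r normrN.
  by rewrite ger0_norm // divr_ge0 ?ler0n ?ltW.
rewrite /density_is (negligibleP _ A_gt0).
by split=> small eps /small[N HN]; exists N => n /HN; rewrite dist1.
Qed.

Lemma density_is0 :
  density_is L 0 <-> negligible s (fun n => nwords (final M) n (init M)).
Proof.
have dist0 n : `|density_at L n - 0| = (nwords (final M) n (init M))%:R / (s ^ n)%:R.
  by rewrite subr0 density_atE ger0_norm // divr_ge0 ?ler0n.
rewrite /density_is (negligibleP _ A_gt0).
by split=> small eps /small[N HN]; exists N => n /HN; rewrite dist0.
Qed.

End Density.

Unset Implicit Arguments.
Local Open Scope ring_scope.

Theorem mainTheorem2 (A : finType) (L : pred (seq A)) (M : dfa A) :
  (0 < #|A|)%N ->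
  minimal_automaton_of M L ->
  (density_is L 1 <->
     zero_automaton M /\ exists q : state M, is_sink q /\ final M q) /\
  (density_is L 0 <->
     zero_automaton M /\ exists q : state M, is_sink q /\ ~~ final M q).
Proof.
move=> A_gt0 [acc red L_rec].
have red_nonfinal p q :
    (forall w, ~~ final M (run p w) = ~~ final M (run q w)) -> p = q.
  by move=> same; apply: red => w; apply: negb_inj.
split; first by rewrite density_is1 // negligible_rejectionP.
rewrite density_is0 // -negligible_rejectionP //.
by split; apply: negligible_le => n; apply: sub_nwords => q /=; rewrite negbK.
Qed.
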